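(* Let $G$ be a finitely generated group and $\psi$ a minimal action of $G$ by orientation-preserving homeomorphisms of $\mathbb{R}$ such that some nondegenerate bounded interval is $\psi$-contractible, but not every bounded interval is $\psi$-contractible. Define $\varphi(x) := \sup\{ y > x : [x,y] \text{ is } \psi\text{-contractible}\}$. Then $\varphi$ is a (finite-valued) orientation-preserving homeomorphism of $\mathbb{R}$ satisfying $\varphi(x)>x$ for all $x$ and $\varphi\circ\psi(g)=\psi(g)\circ\varphi$ for all $g\in G$. Consequently $\psi$ induces an action of $G$ by homeomorphisms on the quotient $\mathbb{R}/\!\sim$, where $x\sim\varphi(x)$, which is a topological circle.
   Context: A bounded interval $I$ is $\psi$-contractible if there is a sequence $g_n\in G$ such that the intervals $\psi(g_n)(I)$ converge to a point (their lengths tend to $0$ and they converge to a single point). A minimal action is one where every orbit is dense. *)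

From Stdlib Require Import Reals Relations List.
Open Scope R_scope.

Record Group := {
  gcar :> Type;
  gmul : gcar -> gcar -> gcar;
  ginv : gcar -> gcar;
  gone : gcar;
  gmul_assoc : forall a b c, gmul a (gmul b c) = gmul (gmul a b) c;
  gmul_one_l : forall a, gmul gone a = a;
  gmul_one_r : forall a, gmul a gone = a;
  gmul_inv_l : forall a, gmul (ginv a) a = gone;
  gmul_inv_r : forall a, gmul a (ginv a) = gone
}.

Inductive generated (G : Group) (S : list (gcar G)) : gcar G -> Prop :=
| gen_base : forall s, In s S -> generated G S s
| gen_one : generated G S (gone G)
| gen_mul : forall a b, generated G S a -> generated G S b -> generated G S (gmul G a b)
| gen_inv : forall a, generated G S a -> generated G S (ginv G a).

Definition finitely_generated (G : Group) : Prop :=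
  exists S : list (gcar G), forall g, generated G S g.

Definition oph (f : R -> R) : Prop :=
  continuity f /\
  (exists h : R -> R, continuity h /\ (forall x, h (f x) = x) /\ (forall y, f (h y) = y)) /\
  (forall x y, x < y -> f x < f y).

Definition oph_action (G : Group) (psi : gcar G -> R -> R) : Prop :=
  (forall g, oph (psi g)) /\
  (forall x, psi (gone G) x = x) /\
  (forall g h x, psi (gmul G g h) x = psi g (psi h x)).

Definition minimal_action (G : Group) (psi : gcar G -> R -> R) : Prop :=
  forall x y eps, 0 < eps -> exists g, Rabs (psi g x - y) < eps.

(** The bounded interval with endpoints a <= b is psi-contractible: some
    sequence of images psi(g_n)(I) = [psi g_n a, psi g_n b] has length
    tending to 0 and converges to a single point p. (Since each psi g is
    increasing, this depends only on the endpoints, not on whether the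
    interval is open/closed.) *)
Definition contractible (G : Group) (psi : gcar G -> R -> R) (a b : R) : Prop :=
  exists (gs : nat -> gcar G) (p : R),
    Un_cv (fun n => psi (gs n) b - psi (gs n) a) 0 /\
    Un_cv (fun n => psi (gs n) a) p /\
    Un_cv (fun n => psi (gs n) b) p.

Definition on_circle (z : R * R) : Prop := fst z ^ 2 + snd z ^ 2 = 1.

Definition dist2 (z w : R * R) : R :=
  sqrt ((fst z - fst w) ^ 2 + (snd z - snd w) ^ 2).

Definition circle_open (U : R * R -> Prop) : Prop :=
  forall z, U z -> exists eps, 0 < eps /\
    forall w, on_circle w -> dist2 w z < eps -> U w.

Definition R_open (V : R -> Prop) : Prop :=
  forall x, V x -> exists eps, 0 < eps /\ forall y, Rabs (y - x) < eps -> V y.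

Definition circle_continuous (h : R * R -> R * R) : Prop :=
  forall z, on_circle z -> forall eps, 0 < eps -> exists delta, 0 < delta /\
    forall w, on_circle w -> dist2 w z < delta -> dist2 (h w) (h z) < eps.

Definition circle_homeo (h : R * R -> R * R) : Prop :=
  (forall z, on_circle z -> on_circle (h z)) /\ circle_continuous h /\
  exists k : R * R -> R * R,
    (forall z, on_circle z -> on_circle (k z)) /\ circle_continuous k /\
    (forall z, on_circle z -> k (h z) = z) /\
    (forall z, on_circle z -> h (k z) = z).

Definition phi_equiv (phi : R -> R) : R -> R -> Prop :=
  clos_refl_sym_trans R (fun x y => y = phi x).

From Stdlib Require Import Reals Relations List Lra Lia ZArith Classical ClassicalEpsilon.
Open Scope R_scope.

(* Contractibility of [x, y] passes to subintervals and is transported by the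
   action, so phi is nondecreasing, G-equivariant and x < phi x; it is finite
   because, by minimality, unbounded contractible intervals [x, y] would make every
   bounded interval contractible.  A nondecreasing equivariant map for a minimal
   action is a homeomorphism: its image is invariant, hence unbounded (the
   supremum of a bounded invariant set is a global fixed point); a plateau would
   be moved partly into itself by some element, which must then both raise and
   lower its value; and a missed value leaves a gap in the image that some orbit
   point enters.  Finally the fixed-point-free homeomorphism phi is conjugate to
   x |-> x + 1 by mapping each fundamental domain [phi^n 0, phi^(n+1) 0) affinely
   onto [n, n + 1); composing with s |-> exp(2 pi i s) identifies R/~ with the
   circle, and the action descends because it commutes with phi. *)

Definition increasing (f : R -> R) : Prop := forall x y, x < y -> f x < f y.

Section Increasing.
Variable f : R -> R.
Hypothesis f_incr : increasing f.

Lemma incr_le x y : x <= y -> f x <= f y.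
Proof. intros [h| ->]; [left; auto | lra]. Qed.

Lemma incr_le_rev x y : f x <= f y -> x <= y.
Proof. intros h. destruct (Rle_lt_dec x y) as [|c]; auto. apply f_incr in c; lra. Qed.

Lemma incr_lt_rev x y : f x < f y -> x < y.
Proof. intros h. destruct (Rlt_le_dec x y) as [|c]; auto. apply incr_le in c; lra. Qed.

Lemma incr_inj x y : f x = f y -> x = y.
Proof.
  intros h. destruct (Rtotal_order x y) as [c|[c|c]]; auto; apply f_incr in c; lra.
Qed.

Lemma incr_surj_continuity : (forall y, exists x, f x = y) -> continuity f.
Proof.
  intros f_surj x eps Heps.
  destruct (f_surj (f x - eps)) as [y1 Hy1], (f_surj (f x + eps)) as [y2 Hy2].
  assert (y1 < x) by (apply incr_lt_rev; lra).
  assert (x < y2) by (apply incr_lt_rev; lra).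
  exists (Rmin (x - y1) (y2 - x)). split; [apply Rmin_glb_lt; lra|].
  intros y [_ Hy]. simpl in *. unfold R_dist in *.
  pose proof (Rmin_l (x - y1) (y2 - x)). pose proof (Rmin_r (x - y1) (y2 - x)).
  apply Rabs_def2 in Hy. destruct Hy.
  assert (f y1 < f y) by (apply f_incr; lra).
  assert (f y < f y2) by (apply f_incr; lra).
  apply Rabs_def1; lra.
Qed.

Lemma is_lub_incr_image (f' : R -> R) (E E' : R -> Prop) m :
  (forall x, f' (f x) = x) -> (forall y, f (f' y) = y) ->
  (forall z, E' z <-> E (f' z)) -> is_lub E m -> is_lub E' (f m).
Proof.
  intros K1 K2 HE [Hub Hl]. split.
  - intros z Hz. rewrite <- (K2 z). apply incr_le, Hub, HE, Hz.
  - intros b Hb. rewrite <- (K2 b). apply incr_le, Hl.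
    intros z Hz. apply incr_le_rev. rewrite K2. apply Hb, HE. rewrite K1. auto.
Qed.

End Increasing.

Lemma incr_surj_oph (f : R -> R) : increasing f -> (forall y, exists x, f x = y) -> oph f.
Proof.
  intros f_incr f_surj. split; [apply incr_surj_continuity; auto|]. split; [|exact f_incr].
  set (h := fun y => proj1_sig (constructive_indefinite_description _ (f_surj y))).
  assert (fK : forall y, f (h y) = y).
  { intros y. unfold h. destruct (constructive_indefinite_description _ _); auto. }
  assert (hK : forall x, h (f x) = x) by (intros x; apply (incr_inj f f_incr); rewrite fK; auto).
  exists h. repeat split; auto.
  apply (incr_surj_continuity h).
  - intros x y hxy. apply (incr_lt_rev f f_incr). rewrite !fK; auto.
  - intros y. exists (f y). auto.
Qed.

Lemma nondecreasing_threshold (f : R -> R) c :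
  (forall x y, x <= y -> f x <= f y) ->
  (exists y, f y < c) -> (exists y, c <= f y) ->
  exists a, (forall y, y < a -> f y < c) /\ (forall y, a < y -> c <= f y).
Proof.
  intros f_mono [y0 Hy0] [y1 Hy1].
  assert (Hbnd : forall y, f y < c -> y <= y1).
  { intros y Hy. destruct (Rle_lt_dec y y1) as [|h]; auto.
    pose proof (f_mono y1 y ltac:(lra)). lra. }
  destruct (completeness (fun y => f y < c)) as [a [Hub Hl]].
  { exists y1. exact Hbnd. }
  { exists y0. exact Hy0. }
  exists a. split.
  - intros y hy. apply Rnot_le_lt. intros h. assert (a <= y); [|lra].
    apply Hl. intros y' Hy'. destruct (Rle_lt_dec y' y) as [|h2]; auto.
    pose proof (f_mono y y' ltac:(lra)). lra.
  - intros y hy. apply Rnot_lt_le. intros h. pose proof (Hub y h). lra.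
Qed.

Lemma Un_cv_squeeze (a b c : nat -> R) l : (forall n, a n <= c n <= b n) ->
  Un_cv a l -> Un_cv b l -> Un_cv c l.
Proof.
  intros H Ha Hb eps He. destruct (Ha eps He) as [N1 H1], (Hb eps He) as [N2 H2].
  exists (max N1 N2). intros n Hn. specialize (H1 n ltac:(lia)). specialize (H2 n ltac:(lia)).
  specialize (H n). unfold R_dist in *. apply Rabs_def2 in H1. apply Rabs_def2 in H2.
  apply Rabs_def1; lra.
Qed.

Section Action.
Variable G : Group.
Variable psi : gcar G -> R -> R.
Hypothesis hact : oph_action G psi.

Lemma act_incr g : increasing (psi g).
Proof. destruct hact as [H _]. destruct (H g) as [_ [_ Hi]]; exact Hi. Qed.

Lemma act_one x : psi (gone G) x = x.
Proof. destruct hact as [_ [H _]]. auto. Qed.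

Lemma act_mul g h x : psi (gmul G g h) x = psi g (psi h x).
Proof. destruct hact as [_ [_ H]]. auto. Qed.

Lemma act_invK g x : psi (ginv G g) (psi g x) = x.
Proof. rewrite <- act_mul, gmul_inv_l. apply act_one. Qed.

Lemma act_Kinv g x : psi g (psi (ginv G g) x) = x.
Proof. rewrite <- act_mul, gmul_inv_r. apply act_one. Qed.

Lemma is_lub_act g (E : R -> Prop) m :
  (forall h y, E y -> E (psi h y)) -> is_lub E m -> is_lub E (psi g m).
Proof.
  intros E_inv. apply (is_lub_incr_image _ (act_incr g) (psi (ginv G g))).
  - apply act_invK.
  - apply act_Kinv.
  - intros z. split; [apply E_inv|]. intros Hz. rewrite <- (act_Kinv g z). apply E_inv, Hz.
Qed.

Lemma contractible_intro a b gs p :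
  Un_cv (fun n => psi (gs n) a) p -> Un_cv (fun n => psi (gs n) b) p ->
  contractible G psi a b.
Proof.
  intros Ha Hb. exists gs, p. split; auto.
  replace 0 with (p - p) by ring. apply CV_minus; auto.
Qed.

Lemma contractible_sub a b c d :
  contractible G psi a b -> a <= c -> c <= d -> d <= b -> contractible G psi c d.
Proof.
  intros [gs [p [_ [Ha Hb]]]] hac hcd hdb.
  assert (Hsq : forall y, a <= y <= b -> Un_cv (fun n => psi (gs n) y) p).
  { intros y hy. apply (Un_cv_squeeze _ _ _ _ (fun n => conj
      (incr_le _ (act_incr (gs n)) a y (proj1 hy)) (incr_le _ (act_incr (gs n)) y b (proj2 hy))));
    auto. }
  apply (contractible_intro _ _ gs p); apply Hsq; lra.
Qed.

Lemma contractible_act h a b :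
  contractible G psi a b -> contractible G psi (psi h a) (psi h b).
Proof.
  intros [gs [p [_ [Ha Hb]]]].
  apply (contractible_intro _ _ (fun n => gmul G (gs n) (ginv G h)) p);
    [eapply Un_cv_ext; [|exact Ha] | eapply Un_cv_ext; [|exact Hb]];
    intros n; simpl; rewrite act_mul, act_invK; auto.
Qed.

Lemma contractible_act_iff h a b :
  contractible G psi (psi h a) (psi h b) <-> contractible G psi a b.
Proof.
  split; [|apply contractible_act]. intros H. apply (contractible_act (ginv G h)) in H.
  rewrite !act_invK in H. auto.
Qed.

Section Minimal.
Hypothesis hmin : minimal_action G psi.

Lemma minimal_moves m : exists g, psi g m <> m.
Proof.
  destruct (hmin m (m + 1) (1/2)) as [g Hg]; [lra|]. exists g. intros E.
  rewrite E in Hg. apply Rabs_def2 in Hg. lra.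
Qed.

Lemma minimal_hits x a b : a < b -> exists g, a < psi g x < b.
Proof.
  intros h. destruct (hmin x ((a + b) / 2) ((b - a) / 2)) as [g Hg]; [lra|].
  exists g. apply Rabs_def2 in Hg. lra.
Qed.

(* The supremum of a bounded invariant set would be a global fixed point. *)
Lemma invariant_unbounded_above (E : R -> Prop) y0 :
  (forall g y, E y -> E (psi g y)) -> E y0 -> forall c, exists y, E y /\ c < y.
Proof.
  intros E_inv Hy0 c. apply NNPP. intros Hn.
  destruct (completeness E) as [m Hm].
  { exists c. intros y Hy. apply Rnot_lt_le. intros h. apply Hn. eauto. }
  { eauto. }
  destruct (minimal_moves m) as [g Hg]. apply Hg.
  apply (is_lub_u E); auto. apply is_lub_act; auto.
Qed.

Lemma invariant_unbounded_below (E : R -> Prop) y0 :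
  (forall g y, E y -> E (psi g y)) -> E y0 -> forall c, exists y, E y /\ y < c.
Proof.
  intros E_inv Hy0 c. apply NNPP. intros Hn.
  set (L := fun z => forall y, E y -> z <= y).
  assert (L_inv : forall g z, L z -> L (psi g z)).
  { intros g z Hz y Hy. rewrite <- (act_Kinv g y).
    apply (incr_le _ (act_incr g)), Hz, E_inv, Hy. }
  assert (Hc : L c).
  { intros y Hy. apply Rnot_lt_le. intros h. apply Hn. eauto. }
  destruct (invariant_unbounded_above L c L_inv Hc y0) as [z [Hz Hlt]].
  pose proof (Hz y0 Hy0). lra.
Qed.

End Minimal.
End Action.

Section Equivariant.
Variable G : Group.
Variable psi : gcar G -> R -> R.
Hypothesis hact : oph_action G psi.
Hypothesis hmin : minimal_action G psi.
Variable phi : R -> R.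
Hypothesis phi_mono : forall x y, x <= y -> phi x <= phi y.
Hypothesis phi_equiv : forall g x, phi (psi g x) = psi g (phi x).

Let image_invariant g z : (exists x, phi x = z) -> exists x, phi x = psi g z.
Proof. intros [x <-]. exists (psi g x). apply phi_equiv. Qed.

Lemma equivariant_unbounded_below c : exists y, phi y < c.
Proof.
  destruct (invariant_unbounded_below G psi hact hmin _ (phi 0) image_invariant
    (ex_intro _ 0 eq_refl) c) as [z [[y <-] Hy]]. eauto.
Qed.

Lemma equivariant_unbounded_above c : exists y, c < phi y.
Proof.
  destruct (invariant_unbounded_above G psi hact hmin _ (phi 0) image_invariant
    (ex_intro _ 0 eq_refl) c) as [z [[y <-] Hy]]. eauto.
Qed.

(* On a plateau [phi = c] starting at a, an element moving a into the plateau
   would have to both raise and lower the value c. *)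
Lemma equivariant_incr : increasing phi.
Proof.
  intros x x' hx. apply Rnot_le_lt. intros hle.
  assert (Hx' : phi x' = phi x) by (pose proof (phi_mono x x' (Rlt_le _ _ hx)); lra).
  set (c := phi x) in *.
  destruct (nondecreasing_threshold phi c phi_mono (equivariant_unbounded_below c)
    (ex_intro (fun y => c <= phi y) x (Rle_refl c))) as [a [Hbelow Habove]].
  assert (Hax : a <= x) by (apply Rnot_lt_le; intros h; pose proof (Hbelow x h); unfold c in *; lra).
  assert (Hplateau : forall y, a < y <= x' -> phi y = c).
  { intros y [h1 h2]. pose proof (Habove y h1). pose proof (phi_mono y x' h2). lra. }
  destruct (minimal_hits G psi hmin a a x' ltac:(lra)) as [g Hg].
  assert (Hraise : c < psi g c).
  { set (u := (a + psi g a) / 2).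
    assert (Hv : psi (ginv G g) u < a).
    { apply (incr_lt_rev (psi g) (act_incr G psi hact g)).
      rewrite act_Kinv by auto. unfold u; lra. }
    assert (Hu : phi u = psi g (phi (psi (ginv G g) u)))
      by (rewrite <- phi_equiv, act_Kinv; auto).
    pose proof (Hplateau u ltac:(unfold u; lra)).
    pose proof (act_incr G psi hact g _ _ (Hbelow _ Hv)). lra. }
  assert (Hlower : psi g c <= c).
  { set (t := (psi g a + x') / 2).
    assert (Hy : a < psi (ginv G g) t).
    { apply (incr_lt_rev (psi g) (act_incr G psi hact g)).
      rewrite act_Kinv by auto. unfold t; lra. }
    assert (Ht : phi t = psi g (phi (psi (ginv G g) t)))
      by (rewrite <- phi_equiv, act_Kinv; auto).
    pose proof (Hplateau t ltac:(unfold t; lra)).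
    pose proof (incr_le _ (act_incr G psi hact g) _ _ (Habove _ Hy)). lra. }
  lra.
Qed.

(* A missed value leaves a gap in the image of phi that some orbit point enters. *)
Lemma equivariant_surj c : exists x, phi x = c.
Proof.
  apply NNPP. intros Hn.
  destruct (nondecreasing_threshold phi c phi_mono (equivariant_unbounded_below c)
    ltac:(destruct (equivariant_unbounded_above c) as [y Hy]; exists y; lra))
    as [a [Hbelow Habove]].
  destruct (Rtotal_order (phi a) c) as [h|[h|h]]; [| apply Hn; eauto |].
  - destruct (minimal_hits G psi hmin (phi a) (phi a) c h) as [g Hg].
    rewrite <- phi_equiv in Hg.
    destruct (Rle_lt_dec (psi g a) a) as [h2|h2].
    + pose proof (phi_mono _ _ h2). lra.
    + pose proof (Habove _ h2). lra.
  - destruct (minimal_hits G psi hmin (phi a) c (phi a) h) as [g Hg].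
    rewrite <- phi_equiv in Hg.
    destruct (Rle_lt_dec a (psi g a)) as [h2|h2].
    + pose proof (phi_mono _ _ h2). lra.
    + pose proof (Hbelow _ h2). lra.
Qed.

End Equivariant.

Section ContractionSup.
Variable G : Group.
Variable psi : gcar G -> R -> R.
Hypothesis hact : oph_action G psi.
Hypothesis hmin : minimal_action G psi.

Definition right_contractible x y := x < y /\ contractible G psi x y.

Lemma right_contractible_nonempty :
  (exists a b, a < b /\ contractible G psi a b) -> forall x, exists y, right_contractible x y.
Proof.
  intros [a [b [hab Hc]]] x. destruct (minimal_hits G psi hmin x a b hab) as [g Hg].
  exists (psi (ginv G g) b). split.
  - rewrite <- (act_invK G psi hact g x) at 1. apply act_incr; auto. lra.
  - rewrite <- (act_invK G psi hact g x). apply contractible_act; auto.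
    apply (contractible_sub G psi hact a b); auto; lra.
Qed.

(* If [x, y] were contractible for arbitrarily large y, moving x below a
   would make every [a, b] contractible. *)
Lemma right_contractible_bound :
  ~ (forall a b, a <= b -> contractible G psi a b) -> forall x, bound (right_contractible x).
Proof.
  intros hnot x. apply NNPP. intros Hn. apply hnot. intros a b hab.
  destruct (minimal_hits G psi hmin x (a - 2) a ltac:(lra)) as [h Hh].
  assert (exists y, right_contractible x y /\ psi (ginv G h) b < y) as [y [[_ Hy] Hy2]].
  { apply NNPP; intros Hc. apply Hn. exists (psi (ginv G h) b). intros y Hy.
    apply Rnot_lt_le. intros Hlt. apply Hc. eauto. }
  apply (act_incr G psi hact h) in Hy2. rewrite act_Kinv in Hy2 by auto.
  apply (contractible_act G psi hact h) in Hy.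
  apply (contractible_sub G psi hact _ _ a b Hy); lra.
Qed.

Variable phi : R -> R.
Hypothesis phi_lub : forall x, is_lub (right_contractible x) (phi x).
Hypothesis phi_nonempty : forall x, exists y, right_contractible x y.

Lemma contraction_sup_gt x : x < phi x.
Proof.
  destruct (phi_nonempty x) as [y Hy]. pose proof (proj1 (phi_lub x) y Hy).
  destruct Hy. lra.
Qed.

Lemma contraction_sup_mono x x' : x <= x' -> phi x <= phi x'.
Proof.
  intros hx. apply (proj2 (phi_lub x)). intros y [hxy Hy].
  destruct (Rle_lt_dec y x') as [h|h].
  - pose proof (contraction_sup_gt x'). lra.
  - apply (proj1 (phi_lub x')). split; auto.
    apply (contractible_sub G psi hact x y); auto; lra.
Qed.

Lemma contraction_sup_equivariant g x : phi (psi g x) = psi g (phi x).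
Proof.
  symmetry. apply (is_lub_u (right_contractible (psi g x))); auto.
  apply (is_lub_incr_image _ (act_incr G psi hact g) (psi (ginv G g))
    (right_contractible x)).
  - apply act_invK; auto.
  - apply act_Kinv; auto.
  - intros z. unfold right_contractible.
    rewrite <- (contractible_act_iff G psi hact g x), act_Kinv by auto.
    split; intros [h1 h2]; split; auto.
    + apply (incr_lt_rev (psi g) (act_incr G psi hact g)). rewrite act_Kinv; auto.
    + apply (act_incr G psi hact g) in h1. rewrite act_Kinv in h1; auto.
  - auto.
Qed.

End ContractionSup.

Definition circle_map (s : R) : R * R := (cos (2 * PI * s), sin (2 * PI * s)).

Lemma circle_map_on s : on_circle (circle_map s).
Proof.
  unfold on_circle, circle_map; simpl. pose proof (sin2_cos2 (2 * PI * s)).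
  unfold Rsqr in *. lra.
Qed.

Lemma circle_map_periodic s (k : Z) : circle_map (s + IZR k) = circle_map s.
Proof.
  unfold circle_map. replace (2 * PI * (s + IZR k)) with (2 * PI * s + 2 * (IZR k * PI)) by ring.
  assert (h0 : sin (IZR k * PI) = 0) by (apply sin_eq_0_1; eauto).
  assert (h1 : cos (2 * (IZR k * PI)) = 1) by (rewrite cos_2a_sin, h0; ring).
  assert (h2 : sin (2 * (IZR k * PI)) = 0) by (rewrite sin_2a, h0; ring).
  rewrite cos_plus, sin_plus, h1, h2. f_equal; ring.
Qed.

Lemma circle_map_eq s t : circle_map s = circle_map t -> exists k : Z, s = t + IZR k.
Proof.
  unfold circle_map. intros H. injection H as H1 H2.
  set (A := 2 * PI * s) in *. set (B := 2 * PI * t) in *.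
  assert (hc : cos (A - B) = 1).
  { rewrite cos_minus, H1, H2. pose proof (sin2_cos2 B). unfold Rsqr in *. lra. }
  replace (A - B) with (2 * ((A - B) / 2)) in hc by field.
  rewrite cos_2a_sin in hc.
  assert (hs : sin ((A - B) / 2) = 0).
  { assert (sin ((A - B) / 2) * sin ((A - B) / 2) = 0) as H by lra.
    destruct (Rmult_integral _ _ H); auto. }
  destruct (sin_eq_0_0 _ hs) as [k Hk]. exists k.
  unfold A, B in Hk. pose proof PI_RGT_0.
  apply (Rmult_eq_reg_l PI); [|lra].
  replace (PI * s) with (PI * t + (2 * PI * s - 2 * PI * t) / 2) by field. rewrite Hk. ring.
Qed.

Lemma circle_map_surj z : on_circle z -> exists s, circle_map s = z.
Proof.
  destruct z as [u v]. unfold on_circle; simpl. intros H.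
  assert (hu : -1 <= u <= 1) by (assert (u * u <= 1) by nra; split; nra).
  assert (hsq : sqrt (1 - u²) = Rabs v).
  { rewrite <- sqrt_Rsqr_abs. f_equal. unfold Rsqr. lra. }
  pose proof PI_RGT_0.
  destruct (Rle_lt_dec 0 v) as [hv|hv].
  - exists (acos u / (2 * PI)). unfold circle_map.
    replace (2 * PI * (acos u / (2 * PI))) with (acos u) by (field; lra).
    rewrite cos_acos, sin_acos, hsq, Rabs_right; auto; lra.
  - exists (- acos u / (2 * PI)). unfold circle_map.
    replace (2 * PI * (- acos u / (2 * PI))) with (- acos u) by (field; lra).
    rewrite cos_neg, sin_neg, cos_acos, sin_acos, hsq, Rabs_left; auto. f_equal; ring.
Qed.

Lemma dist2_circle_map s t : dist2 (circle_map s) (circle_map t) = 2 * Rabs (sin (PI * (s - t))).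
Proof.
  unfold dist2, circle_map; cbn [fst snd].
  assert (E : (cos (2 * PI * s) - cos (2 * PI * t)) ^ 2 + (sin (2 * PI * s) - sin (2 * PI * t)) ^ 2
    = (2 * sin (PI * (s - t)))²).
  { pose proof (sin2_cos2 (2 * PI * s)). pose proof (sin2_cos2 (2 * PI * t)).
    pose proof (cos_minus (2 * PI * s) (2 * PI * t)). pose proof (cos_2a_sin (PI * (s - t))).
    replace (2 * (PI * (s - t))) with (2 * PI * s - 2 * PI * t) in * by ring.
    unfold Rsqr in *. nra. }
  rewrite E, sqrt_Rsqr_abs, Rabs_mult, (Rabs_right 2); lra.
Qed.

Lemma dist2_le_abs a b c d : dist2 (a, b) (c, d) <= Rabs (a - c) + Rabs (b - d).
Proof.
  unfold dist2; cbn [fst snd]. pose proof (Rabs_pos (a - c)). pose proof (Rabs_pos (b - d)).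
  rewrite <- (sqrt_pow2 (Rabs (a - c) + Rabs (b - d))) by lra.
  apply sqrt_le_1_alt. rewrite <- (pow2_abs (a - c)), <- (pow2_abs (b - d)). nra.
Qed.

Lemma circle_map_open t eps : 0 < eps -> exists d, 0 < d /\ forall w, on_circle w ->
  dist2 w (circle_map t) < d -> exists s, Rabs (s - t) < eps /\ circle_map s = w.
Proof.
  intros he. pose proof PI_RGT_0. set (e := Rmin eps (1/2)).
  assert (he1 : 0 < e) by (apply Rmin_glb_lt; lra).
  assert (he2 : e <= eps) by apply Rmin_l.
  assert (he3 : e <= 1/2) by apply Rmin_r.
  exists (2 * sin (PI * e)). split.
  { assert (0 < sin (PI * e)) by (apply sin_gt_0; nra). lra. }
  intros w hw hd. destruct (circle_map_surj w hw) as [s0 <-].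
  set (k := Zfloor (s0 - t + 1/2)). pose proof (Zfloor_bound (s0 - t + 1/2)) as hk. fold k in hk.
  exists (s0 + IZR (- k)). split; [|apply circle_map_periodic].
  rewrite <- (circle_map_periodic s0 (- k)), dist2_circle_map in hd.
  rewrite opp_IZR in *. set (d := s0 + - IZR k - t) in *.
  assert (hd1 : -1/2 <= d < 1/2) by (unfold d; lra).
  apply Rnot_le_lt. intros hc.
  assert (Hsin : forall r, e <= r <= 1/2 -> sin (PI * e) <= sin (PI * r)).
  { intros r [h1 h2]. destruct h1 as [h1|<-]; [|lra].
    left. apply sin_increasing_1; nra. }
  assert (Hs : sin (PI * e) <= Rabs (sin (PI * d))).
  { destruct (Rle_lt_dec 0 d) as [h0|h0].
    - rewrite Rabs_right in hc by lra.
      rewrite Rabs_right by (apply Rle_ge, sin_ge_0; nra). apply Hsin; lra.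
    - rewrite Rabs_left in hc by lra.
      replace (PI * d) with (- (PI * - d)) by ring. rewrite sin_neg, Rabs_Ropp.
      rewrite Rabs_right by (apply Rle_ge, sin_ge_0; nra). apply Hsin; lra. }
  lra.
Qed.

Section ShiftConjugacy.
Variables f fi : R -> R.
Hypothesis f_incr : increasing f.
Hypothesis f_cont : continuity f.
Hypothesis fi_cont : continuity fi.
Hypothesis fiK : forall x, fi (f x) = x.
Hypothesis fK : forall y, f (fi y) = y.
Hypothesis f_gt : forall x, x < f x.

Lemma fi_incr : increasing fi.
Proof. intros x y h. apply (incr_lt_rev f f_incr). rewrite !fK; auto. Qed.

Lemma fi_lt x : fi x < x.
Proof. pose proof (f_gt (fi x)) as H. rewrite fK in H. auto. Qed.

Definition iterz (n : Z) (x : R) : R :=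
  if Z.leb 0 n then Nat.iter (Z.to_nat n) f x else Nat.iter (Z.to_nat (- n)) fi x.

Lemma iterz_succ n x : iterz (Z.succ n) x = f (iterz n x).
Proof.
  unfold iterz. destruct (Z.leb_spec 0 n) as [h|h].
  - destruct (Z.leb_spec 0 (Z.succ n)); [|lia].
    rewrite Z2Nat.inj_succ by lia. reflexivity.
  - destruct (Z.leb_spec 0 (Z.succ n)).
    + assert (n = -1)%Z by lia. subst. simpl. rewrite fK. auto.
    + replace (Z.to_nat (- n)) with (S (Z.to_nat (- Z.succ n))) by lia.
      simpl. rewrite fK. auto.
Qed.

Lemma iterz_pred n x : iterz (Z.pred n) x = fi (iterz n x).
Proof. rewrite <- (Z.succ_pred n) at 2. rewrite iterz_succ, fiK. auto. Qed.

Lemma iterz_add m n x : iterz (m + n) x = iterz m (iterz n x).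
Proof.
  revert m. apply Z.peano_ind.
  - reflexivity.
  - intros m IH. rewrite Z.add_succ_l, !iterz_succ, IH. auto.
  - intros m IH. rewrite Z.add_pred_l, !iterz_pred, IH. auto.
Qed.

Lemma iterzK n x : iterz (- n) (iterz n x) = x.
Proof. rewrite <- iterz_add, Z.add_opp_diag_l. auto. Qed.

Lemma iterz_incr n : increasing (iterz n).
Proof.
  induction n using Z.peano_ind; intros x y h.
  - auto.
  - rewrite !iterz_succ. auto.
  - rewrite !iterz_pred. apply fi_incr. auto.
Qed.

Lemma iterz_lt_index m n x : (m < n)%Z -> iterz m x < iterz n x.
Proof.
  intros h. replace n with (Z.succ (n - m - 1) + m)%Z by lia. rewrite iterz_add.
  set (y := iterz m x). clearbody y.
  assert (Hk : forall k : nat, y < iterz (Z.succ (Z.of_nat k)) y).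
  { induction k; [apply f_gt|].
    rewrite Nat2Z.inj_succ, iterz_succ. pose proof (f_gt (iterz (Z.succ (Z.of_nat k)) y)).
    lra. }
  replace (n - m - 1)%Z with (Z.of_nat (Z.to_nat (n - m - 1))) by lia. apply Hk.
Qed.

Lemma iterz_le_index m n x : (m <= n)%Z -> iterz m x <= iterz n x.
Proof.
  intros h. destruct (Z.eq_dec m n) as [->|]; [lra|]. left; apply iterz_lt_index; lia.
Qed.

(* A bounded monotone orbit would converge to a fixed point of f. *)
Lemma iterz_unbounded_above a x : exists k : nat, x < iterz (Z.of_nat k) a.
Proof.
  apply NNPP. intros Hn.
  set (u := fun k => iterz (Z.of_nat k) a).
  assert (Hs : forall k, u (S k) = f (u k)).
  { intros k. unfold u. rewrite Nat2Z.inj_succ, iterz_succ. auto. }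
  destruct (growing_cv u) as [L HL].
  { intros k. rewrite Hs. left; apply f_gt. }
  { exists x. intros r [i ->]. apply Rnot_lt_le. intros h. apply Hn. eauto. }
  assert (H1 : Un_cv (fun k => f (u k)) (f L)) by (apply continuity_seq; auto).
  assert (H2 : Un_cv (fun k => f (u k)) L).
  { intros eps he. destruct (HL eps he) as [N HN]. exists N. intros n hn.
    rewrite <- Hs. apply HN. lia. }
  pose proof (UL_sequence _ _ _ H1 H2). pose proof (f_gt L). lra.
Qed.

Lemma iterz_unbounded_below a x : exists k : nat, iterz (- Z.of_nat k) a < x.
Proof.
  apply NNPP. intros Hn.
  set (u := fun k => iterz (- Z.of_nat k) a).
  assert (Hs : forall k, u (S k) = fi (u k)).
  { intros k. unfold u. rewrite Nat2Z.inj_succ, <- iterz_pred. f_equal. lia. }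
  destruct (decreasing_cv u) as [L HL].
  { intros k. rewrite Hs. left; apply fi_lt. }
  { exists (- x). intros r [i ->]. unfold opp_seq.
    assert (x <= u i) by (apply Rnot_lt_le; intros h; apply Hn; eauto). lra. }
  assert (H1 : Un_cv (fun k => fi (u k)) (fi L)) by (apply continuity_seq; auto).
  assert (H2 : Un_cv (fun k => fi (u k)) L).
  { intros eps he. destruct (HL eps he) as [N HN]. exists N. intros n hn.
    rewrite <- Hs. apply HN. lia. }
  pose proof (UL_sequence _ _ _ H1 H2). pose proof (fi_lt L). lra.
Qed.

Variable a : R.

Definition fundamental_index x n := iterz n a <= x < iterz (Z.succ n) a.

Lemma fundamental_index_exists x : exists n, fundamental_index x n.
Proof.
  destruct (iterz_unbounded_below a x) as [k1 H1], (iterz_unbounded_above a x) as [k2 H2].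
  assert (Hj : forall j : nat, x < iterz (- Z.of_nat k1 + Z.of_nat j) a ->
                 exists n, fundamental_index x n).
  { induction j; intros h.
    - rewrite Z.add_0_r in h. lra.
    - rewrite Nat2Z.inj_succ, Z.add_succ_r in h.
      destruct (Rle_lt_dec (iterz (- Z.of_nat k1 + Z.of_nat j) a) x) as [h2|h2].
      + exists (- Z.of_nat k1 + Z.of_nat j)%Z. split; auto.
      + apply IHj; auto. }
  apply (Hj (k1 + k2)%nat). rewrite Nat2Z.inj_add.
  replace (- Z.of_nat k1 + (Z.of_nat k1 + Z.of_nat k2))%Z with (Z.of_nat k2) by lia. auto.
Qed.

Lemma fundamental_index_unique x n m :
  fundamental_index x n -> fundamental_index x m -> n = m.
Proof.
  intros [h1 h2] [h3 h4]. destruct (Z.lt_total n m) as [c|[c|c]]; auto; exfalso.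
  - pose proof (iterz_le_index (Z.succ n) m a ltac:(lia)). lra.
  - pose proof (iterz_le_index (Z.succ m) n a ltac:(lia)). lra.
Qed.

Lemma fundamental_index_frac x n :
  fundamental_index x n -> a <= iterz (- n) x < f a.
Proof.
  intros [h1 h2]. split.
  - rewrite <- (iterzK n a). apply (incr_le _ (iterz_incr (- n)) _ _ h1).
  - replace (f a) with (iterz (- n) (iterz (Z.succ n) a)).
    + apply iterz_incr, h2.
    + rewrite <- iterz_add. replace (- n + Z.succ n)%Z with 1%Z by lia. reflexivity.
Qed.

Definition domain_index x : Z :=
  proj1_sig (constructive_indefinite_description _ (fundamental_index_exists x)).

Lemma domain_index_spec x : fundamental_index x (domain_index x).
Proof. unfold domain_index. destruct (constructive_indefinite_description _ _); auto. Qed.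

(* Each fundamental domain [f^n a, f^(n+1) a) is mapped affinely onto [n, n+1)
   after pulling it back to [a, f a). *)
Definition shift_coord x : R :=
  IZR (domain_index x) + (iterz (- domain_index x) x - a) / (f a - a).

Lemma shift_coord_eq x n :
  fundamental_index x n -> shift_coord x = IZR n + (iterz (- n) x - a) / (f a - a).
Proof.
  intros h. unfold shift_coord.
  rewrite (fundamental_index_unique x (domain_index x) n); auto. apply domain_index_spec.
Qed.

Lemma shift_coord_iterz k x : shift_coord (iterz k x) = shift_coord x + IZR k.
Proof.
  pose proof (domain_index_spec x) as [h1 h2]. set (n := domain_index x) in *.
  assert (Hk : fundamental_index (iterz k x) (n + k)).
  { split.
    - rewrite Z.add_comm, iterz_add. apply (incr_le _ (iterz_incr k) _ _ h1).
    - replace (Z.succ (n + k)) with (k + Z.succ n)%Z by lia.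
      rewrite iterz_add. apply iterz_incr, h2. }
  rewrite (shift_coord_eq _ _ Hk), (shift_coord_eq x n (conj h1 h2)), <- iterz_add.
  replace (- (n + k) + k)%Z with (- n)%Z by lia. rewrite plus_IZR. ring.
Qed.

Lemma shift_coord_incr : increasing shift_coord.
Proof.
  intros x y h. pose proof (f_gt a) as ha.
  pose proof (domain_index_spec x) as hx. pose proof (domain_index_spec y) as hy.
  set (n := domain_index x) in *. set (m := domain_index y) in *.
  rewrite (shift_coord_eq x n hx), (shift_coord_eq y m hy).
  pose proof (fundamental_index_frac x n hx). pose proof (fundamental_index_frac y m hy).
  destruct (Z.lt_total n m) as [c|[c|c]].
  - assert (IZR n + 1 <= IZR m) by (rewrite <- plus_IZR; apply IZR_le; lia).
    assert ((iterz (- n) x - a) / (f a - a) < 1).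
    { apply (Rmult_lt_reg_r (f a - a)); [lra|]. field_simplify; lra. }
    assert (0 <= (iterz (- m) y - a) / (f a - a)).
    { apply Rmult_le_pos; [lra|]. left; apply Rinv_0_lt_compat; lra. }
    lra.
  - rewrite <- c. apply Rplus_lt_compat_l, Rmult_lt_compat_r.
    + apply Rinv_0_lt_compat; lra.
    + pose proof (iterz_incr (- n) x y h). lra.
  - exfalso. destruct hx as [hx1 _], hy as [_ hy2].
    pose proof (iterz_le_index (Z.succ m) n a ltac:(lia)). lra.
Qed.

Lemma shift_coord_surj s : exists x, shift_coord x = s.
Proof.
  pose proof (f_gt a) as ha. pose proof (Zfloor_bound s) as hn.
  set (n := Zfloor s) in *. set (r := s - IZR n).
  set (y := iterz n (a + r * (f a - a))).
  assert (hb : fundamental_index y n).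
  { unfold y. split.
    - apply (incr_le _ (iterz_incr n)). unfold r; nra.
    - change (Z.succ n) with (n + 1)%Z. rewrite iterz_add.
      apply iterz_incr. change (iterz 1 a) with (f a). unfold r; nra. }
  exists y. rewrite (shift_coord_eq y n hb). unfold y. rewrite iterzK.
  unfold r. field. lra.
Qed.

Lemma phi_equiv_iterz x y : phi_equiv f x y <-> exists n, y = iterz n x.
Proof.
  split.
  - intros H. induction H as [x y E| x | x y _ IH | x y z _ IH1 _ IH2].
    + exists 1%Z. rewrite E. reflexivity.
    + exists 0%Z. reflexivity.
    + destruct IH as [n ->]. exists (- n)%Z. rewrite iterzK. reflexivity.
    + destruct IH1 as [n ->], IH2 as [m ->]. exists (m + n)%Z. rewrite iterz_add. auto.
  - intros [n ->]. revert n. apply Z.peano_ind.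
    + apply rst_refl.
    + intros n IH. eapply rst_trans; [exact IH|]. apply rst_step. apply iterz_succ.
    + intros n IH. eapply rst_trans; [exact IH|]. apply rst_sym, rst_step.
      rewrite <- (Z.succ_pred n) at 1. apply iterz_succ.
Qed.

Lemma circle_map_shift_coord_eq x y :
  circle_map (shift_coord x) = circle_map (shift_coord y) <-> phi_equiv f x y.
Proof.
  rewrite phi_equiv_iterz. split.
  - intros H. destruct (circle_map_eq _ _ H) as [k Hk]. exists (- k)%Z.
    rewrite <- shift_coord_iterz in Hk. apply (incr_inj _ shift_coord_incr) in Hk.
    rewrite Hk, iterzK. reflexivity.
  - intros [n ->]. rewrite shift_coord_iterz, circle_map_periodic. reflexivity.
Qed.

End ShiftConjugacy.

Lemma continuity_pt_eps_delta f x : continuity_pt f x -> forall eps, 0 < eps ->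
  exists d, 0 < d /\ forall y, Rabs (y - x) < d -> Rabs (f y - f x) < eps.
Proof.
  intros H eps he. destruct (H eps he) as [d [hd H']]. exists d. split; auto.
  intros y hy. destruct (Req_dec x y) as [<-|ne].
  - unfold Rminus. rewrite Rplus_opp_r, Rabs_R0. auto.
  - apply H'. split; [split; [constructor|auto]|]. exact hy.
Qed.

Section CircleQuotient.
Variable th : R -> R.
Hypothesis th_incr : increasing th.
Hypothesis th_surj : forall s, exists x, th x = s.

Definition circle_proj x := circle_map (th x).

Lemma circle_proj_surj z : on_circle z -> exists x, circle_proj x = z.
Proof.
  intros hz. destruct (circle_map_surj z hz) as [s <-]. destruct (th_surj s) as [x <-].
  exists x. reflexivity.
Qed.

Lemma circle_proj_fst_continuity : continuity (fun x => fst (circle_proj x)).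
Proof.
  change (continuity (comp cos (mult_real_fct (2 * PI) th))).
  apply continuity_comp; [apply continuity_scal | apply continuity_cos].
  apply incr_surj_continuity; auto.
Qed.

Lemma circle_proj_snd_continuity : continuity (fun x => snd (circle_proj x)).
Proof.
  change (continuity (comp sin (mult_real_fct (2 * PI) th))).
  apply continuity_comp; [apply continuity_scal | apply continuity_sin].
  apply incr_surj_continuity; auto.
Qed.

Lemma circle_proj_near x eps : 0 < eps -> exists d, 0 < d /\
  forall y, Rabs (y - x) < d -> dist2 (circle_proj y) (circle_proj x) < eps.
Proof.
  intros he.
  destruct (continuity_pt_eps_delta _ x (circle_proj_fst_continuity x) (eps / 2))
    as [d1 [h1 H1]]; [lra|].
  destruct (continuity_pt_eps_delta _ x (circle_proj_snd_continuity x) (eps / 2))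
    as [d2 [h2 H2]]; [lra|].
  exists (Rmin d1 d2). split; [apply Rmin_glb_lt; auto|].
  intros y hy. pose proof (Rmin_l d1 d2). pose proof (Rmin_r d1 d2).
  specialize (H1 y ltac:(lra)). specialize (H2 y ltac:(lra)).
  destruct (circle_proj y) as [a b], (circle_proj x) as [c d]. cbn [fst snd] in H1, H2.
  pose proof (dist2_le_abs a b c d). lra.
Qed.

Lemma circle_proj_open x eps : 0 < eps -> exists d, 0 < d /\ forall w, on_circle w ->
  dist2 w (circle_proj x) < d -> exists y, Rabs (y - x) < eps /\ circle_proj y = w.
Proof.
  intros he.
  assert (h1 : th (x - eps) < th x) by (apply th_incr; lra).
  assert (h2 : th x < th (x + eps)) by (apply th_incr; lra).
  set (d1 := Rmin (th x - th (x - eps)) (th (x + eps) - th x)).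
  assert (hd1l : d1 <= th x - th (x - eps)) by apply Rmin_l.
  assert (hd1r : d1 <= th (x + eps) - th x) by apply Rmin_r.
  destruct (circle_map_open (th x) d1 ltac:(apply Rmin_glb_lt; lra)) as [d [hd Hd]].
  exists d. split; [auto|]. intros w hw hdw. destruct (Hd w hw hdw) as [s [hs <-]].
  destruct (th_surj s) as [y <-]. exists y. split; [|reflexivity].
  apply Rabs_def2 in hs. destruct hs.
  assert (x - eps < y) by (apply (incr_lt_rev th th_incr); lra).
  assert (y < x + eps) by (apply (incr_lt_rev th th_incr); lra).
  apply Rabs_def1; lra.
Qed.

Lemma circle_open_iff_proj (U : R * R -> Prop) : (forall z, U z -> on_circle z) ->
  (circle_open U <-> R_open (fun x => U (circle_proj x))).
Proof.
  intros HU. split.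
  - intros H x Hx. destruct (H _ Hx) as [eps [he H']].
    destruct (circle_proj_near x eps he) as [d [hd Hd]].
    exists d. split; [auto|]. intros y hy. apply H'; [apply circle_map_on | auto].
  - intros H z Hz. destruct (circle_proj_surj z (HU z Hz)) as [x <-].
    destruct (H x Hz) as [eps [he H']]. destruct (circle_proj_open x eps he) as [d [hd Hd]].
    exists d. split; [auto|]. intros w hw hdw. destruct (Hd w hw hdw) as [y [hy <-]]. auto.
Qed.

Variable G : Group.
Variable psi : gcar G -> R -> R.
Hypothesis hact : oph_action G psi.
Hypothesis proj_compat : forall g x y,
  circle_proj x = circle_proj y -> circle_proj (psi g x) = circle_proj (psi g y).

Lemma circle_section_exists z : exists x, on_circle z -> circle_proj x = z.
Proof.
  destruct (classic (on_circle z)) as [h|h].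
  - destruct (circle_proj_surj z h) as [x Hx]. eauto.
  - exists 0. intros; contradiction.
Qed.

Definition circle_section z : R :=
  proj1_sig (constructive_indefinite_description _ (circle_section_exists z)).

Lemma circle_section_spec z : on_circle z -> circle_proj (circle_section z) = z.
Proof. unfold circle_section. destruct (constructive_indefinite_description _ _); auto. Qed.

Definition circle_act g z := circle_proj (psi g (circle_section z)).

Lemma circle_act_proj g x : circle_act g (circle_proj x) = circle_proj (psi g x).
Proof. apply proj_compat, circle_section_spec, circle_map_on. Qed.

Lemma circle_act_continuous g : circle_continuous (circle_act g).
Proof.
  intros z hz eps he. destruct (circle_proj_surj z hz) as [x0 <-].
  destruct (circle_proj_near (psi g x0) eps he) as [d1 [hd1 Hd1]].
  destruct hact as [Ho _]. destruct (Ho g) as [Hc _].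
  destruct (continuity_pt_eps_delta _ _ (Hc x0) d1 hd1) as [d2 [hd2 Hd2]].
  destruct (circle_proj_open x0 d2 hd2) as [d [hd Hd]]. exists d. split; [auto|].
  intros w hw hdw. destruct (Hd w hw hdw) as [y [hy <-]].
  rewrite !circle_act_proj. auto.
Qed.

Lemma circle_act_homeo g : circle_homeo (circle_act g).
Proof.
  split; [intros; apply circle_map_on|]. split; [apply circle_act_continuous|].
  exists (circle_act (ginv G g)). split; [intros; apply circle_map_on|].
  split; [apply circle_act_continuous|].
  split; intros z hz; destruct (circle_proj_surj z hz) as [x <-]; rewrite !circle_act_proj.
  - rewrite act_invK; auto.
  - rewrite act_Kinv; auto.
Qed.

Lemma circle_act_one z : on_circle z -> circle_act (gone G) z = z.
Proof.
  intros hz. destruct (circle_proj_surj z hz) as [x <-].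
  rewrite circle_act_proj, act_one; auto.
Qed.

Lemma circle_act_mul g g' z : on_circle z -> circle_act (gmul G g g') z = circle_act g (circle_act g' z).
Proof.
  intros hz. destruct (circle_proj_surj z hz) as [x <-].
  rewrite !circle_act_proj, act_mul; auto.
Qed.

End CircleQuotient.

Lemma phi_equiv_act (G : Group) (psi : gcar G -> R -> R) (f : R -> R) :
  (forall g x, f (psi g x) = psi g (f x)) ->
  forall g x y, phi_equiv f x y -> phi_equiv f (psi g x) (psi g y).
Proof.
  intros Hc g x y H. induction H as [x y ->| | |].
  - apply rst_step. symmetry. apply Hc.
  - apply rst_refl.
  - apply rst_sym; auto.
  - eapply rst_trans; eauto.
Qed.

Lemma circle_quotient (G : Group) (psi : gcar G -> R -> R) (f : R -> R) :
  oph_action G psi -> oph f -> (forall x, x < f x) ->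
  (forall g x, f (psi g x) = psi g (f x)) ->
  exists p : R -> R * R,
    (forall x, on_circle (p x)) /\
    (forall z, on_circle z -> exists x, p x = z) /\
    (forall x y, p x = p y <-> phi_equiv f x y) /\
    continuity (fun x => fst (p x)) /\ continuity (fun x => snd (p x)) /\
    (forall U : R * R -> Prop, (forall z, U z -> on_circle z) ->
       (circle_open U <-> R_open (fun x => U (p x)))) /\
    exists h : gcar G -> R * R -> R * R,
      (forall g, circle_homeo (h g)) /\
      (forall g x, h g (p x) = p (psi g x)) /\
      (forall z, on_circle z -> h (gone G) z = z) /\
      (forall g g' z, on_circle z -> h (gmul G g g') z = h g (h g' z)).
Proof.
  intros hact [f_cont [[fi [fi_cont [fiK fK]]] f_incr]] f_gt f_comm.
  set (th := shift_coord f fi f_cont fi_cont fiK fK f_gt 0).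
  assert (th_incr : increasing th) by (apply shift_coord_incr; exact f_incr).
  assert (th_surj : forall s, exists x, th x = s) by (apply shift_coord_surj; exact f_incr).
  assert (proj_eq : forall x y, circle_proj th x = circle_proj th y <-> phi_equiv f x y)
    by (intros; apply circle_map_shift_coord_eq; exact f_incr).
  assert (proj_compat : forall g x y, circle_proj th x = circle_proj th y ->
    circle_proj th (psi g x) = circle_proj th (psi g y)).
  { intros g x y. rewrite !proj_eq. apply phi_equiv_act, f_comm. }
  exists (circle_proj th).
  split; [intros x; apply circle_map_on|].
  split; [apply circle_proj_surj, th_surj|].
  split; [exact proj_eq|].
  split; [apply circle_proj_fst_continuity; auto|].
  split; [apply circle_proj_snd_continuity; auto|].
  split; [intros U HU; apply circle_open_iff_proj; auto|].
  exists (circle_act th th_surj G psi).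
  split; [intros g; apply circle_act_homeo; auto|].
  split; [intros g x; apply circle_act_proj; auto|].
  split; [intros z; apply circle_act_one; auto|].
  intros g g' z; apply circle_act_mul; auto.
Qed.

Theorem mainTheorem6 (G : Group) (psi : gcar G -> R -> R)
  (hfg : finitely_generated G)
  (hact : oph_action G psi)
  (hmin : minimal_action G psi)
  (hsome : exists a b, a < b /\ contractible G psi a b)
  (hnot : ~ (forall a b, a <= b -> contractible G psi a b)) :
  exists phi : R -> R,
    (forall x, is_lub (fun y => x < y /\ contractible G psi x y) (phi x)) /\
    oph phi /\
    (forall x, phi x > x) /\
    (forall g x, phi (psi g x) = psi g (phi x)) /\
    exists p : R -> R * R,
      (forall x, on_circle (p x)) /\
      (forall z, on_circle z -> exists x, p x = z) /\
      (forall x y, p x = p y <-> phi_equiv phi x y) /\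
      continuity (fun x => fst (p x)) /\ continuity (fun x => snd (p x)) /\
      (forall U : R * R -> Prop, (forall z, U z -> on_circle z) ->
         (circle_open U <-> R_open (fun x => U (p x)))) /\
      exists h : gcar G -> R * R -> R * R,
        (forall g, circle_homeo (h g)) /\
        (forall g x, h g (p x) = p (psi g x)) /\
        (forall z, on_circle z -> h (gone G) z = z) /\
        (forall g g' z, on_circle z -> h (gmul G g g') z = h g (h g' z)).
Proof.
  pose proof (right_contractible_nonempty G psi hact hmin hsome) as Hne.
  assert (Hsup : forall x, {m | is_lub (right_contractible G psi x) m}).
  { intros x. apply completeness; [apply right_contractible_bound|]; auto. }
  set (phi := fun x => proj1_sig (Hsup x)).
  assert (Hlub : forall x, is_lub (right_contractible G psi x) (phi x))
    by (intros x; apply (proj2_sig (Hsup x))).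
  pose proof (contraction_sup_gt G psi phi Hlub Hne) as Hgt.
  pose proof (contraction_sup_mono G psi hact phi Hlub Hne) as Hmono.
  pose proof (contraction_sup_equivariant G psi hact phi Hlub) as Hequiv.
  assert (Hoph : oph phi).
  { apply incr_surj_oph.
    - apply (equivariant_incr G psi hact hmin); auto.
    - apply (equivariant_surj G psi hact hmin); auto. }
  exists phi. split; [exact Hlub|]. split; [exact Hoph|].
  split; [exact Hgt|]. split; [exact Hequiv|].
  apply (circle_quotient G psi); auto.
Qed.
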